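(* Let $N=(P,T;F)$ be a finite Petri net without isolated elements (every place and transition is incident to some arc), with $T=\{t_1,\dots,t_n\}$. Let $A_0=E$ be the empty module and, for $i=1,\dots,n$, let $A_i = A_{i-1}\bullet[t_i]$ (taking a copy of $[t_i]$ whose node set is disjoint from that of $A_{i-1}$). Then $A_n$ is isomorphic to $[N]$.
   Context: An alphabet $\Sigma$ is a finite set of labels. An interface over $\Sigma$ is a finite set $R$ in which every element carries a label from $\Sigma$ and a positive integer index, such that for each label $l$, if $R$ contains exactly $k$ elements labeled $l$, these carry the indices $1,\dots,k$. A module $G$ over $\Sigma$ is a finite directed graph $(V,E)$ together with two interfaces over $\Sigma$, the left interface ${}^*G\subseteq V$ and the right interface $G^*\subseteq V$ (not necessarily disjoint). Two modules are isomorphic if there is a bijection between their node sets preserving edges, interface membership, labels, and indices. The empty module $E$ has no nodes, no edges, and empty interfaces. Harmonic pairs: for disjoint interfaces $R,S$, elements $r\in R$, $s\in S$ form a harmonic pair $\{r,s\}$ if they have the same label and the same index (in $R$ resp. $S$). Composition: let $A,B$ be modules with disjoint node sets. For each node $x$ of $A$ or $B$ put $x'=\{x,y\}$ if $\{x,y\}$ is a harmonic pair of $A^*$ and ${}^*B$, and $x'=x$ otherwise. For a label $l$ let $m_l$ be the number of $l$-labeled harmonic pairs of $A^*$ and ${}^*B$. $A\bullet B$ has nodes all $x'$ and edges all $(x',z')$ with $(x,z)$ an edge of $A$ or $B$. Left interface: each $x\in{}^*A$ with label $l$, index $n$ gives $x'$ with label $l$, index $n$; each $x\in{}^*B$ without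 harmonic partner in $A^*$, with label $l$ and index $n$ in ${}^*B$, belongs with index $p+n-m_l$, $p$ the number of $l$-labeled elements of ${}^*A$. Right interface: each $x\in B^*$ with label $l$, index $n$ gives $x'$ with label $l$, index $n$; each $x\in A^*$ without harmonic partner in ${}^*B$, with label $l$ and index $n$ in $A^*$, belongs with index $q+n-m_l$, $q$ the number of $l$-labeled elements of $B^*$. Transition atoms: for a net $N=(P,T;F)$ with presets ${}^\bullet t$ and postsets $t^\bullet$, and $t\in T$, the module $[t]$ has node set ${}^\bullet t\cup t^\bullet\cup\{t\}$, edge set $({}^\bullet t\times\{t\})\cup(\{t\}\times t^\bullet)$, and both interfaces equal to ${}^\bullet t\cup t^\bullet$, where each interface place is labeled by its own identity (the alphabet is $P$; hence all indices are $1$). The module $[N]$ is the graph $(P\cup T, F)$ with both interfaces equal to $P$, each place labeled by its own identity. *)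

From mathcomp Require Import all_boot.
Set Implicit Arguments. Unset Strict Implicit. Unset Printing Implicit Defensive.

(* Each interface carries its own labelling
   and indexing (a node in both interfaces may have different label/index in
   each).  Labels are [option Sigma]: interface elements carry [Some l];
   the value on non-interface nodes is irrelevant (junk). *)
Record modul (Sigma : eqType) := Modul {
  mnode : finType;
  medge : rel mnode;
  mL : {set mnode};
  mR : {set mnode};
  mllab : mnode -> option Sigma;
  mlidx : mnode -> nat;
  mrlab : mnode -> option Sigma;
  mridx : mnode -> nat }.

(* Interface condition: every element labelled, and for each label l with k
   elements, indices are exactly 1..k (injective, in range). *)
Definition is_interface (Sigma : eqType) (V : finType) (S : {set V})
  (lab : V -> option Sigma) (idx : V -> nat) : Prop :=
  forall x, x \in S -> lab x != None /\
    0 < idx x <= #|[set y in S | lab y == lab x]| /\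
    (forall y, y \in S -> lab y = lab x -> idx y = idx x -> y = x).

Definition module_wf (Sigma : eqType) (G : modul Sigma) : Prop :=
  is_interface (@mL _ G) (@mllab _ G) (@mlidx _ G) /\
  is_interface (@mR _ G) (@mrlab _ G) (@mridx _ G).

Definition mod_iso (Sigma : eqType) (G H : modul Sigma) : Prop :=
  exists h : mnode G -> mnode H,
    bijective h /\
    (forall x y, @medge _ H (h x) (h y) = @medge _ G x y) /\
    (forall x, (h x \in @mL _ H) = (x \in @mL _ G)) /\
    (forall x, (h x \in @mR _ H) = (x \in @mR _ G)) /\
    (forall x, x \in @mL _ G -> @mllab _ H (h x) = @mllab _ G x /\ @mlidx _ H (h x) = @mlidx _ G x) /\
    (forall x, x \in @mR _ G -> @mrlab _ H (h x) = @mrlab _ G x /\ @mridx _ H (h x) = @mridx _ G x).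

Definition empty_mod (Sigma : eqType) : modul Sigma :=
  @Modul Sigma void (fun _ _ => false) set0 set0
    (fun _ => None) (fun _ => 0) (fun _ => None) (fun _ => 0).

(* Nodes of A . B: the nodes of A (a harmonic pair {x,y}
   is represented by its A-side x) together with the nodes of B having no
   harmonic partner in A*.  This is the disjoint union with harmonic pairs
   identified (the node sets of A and B are made disjoint by the sum type). *)
Section Compose.
Variables (Sigma : eqType) (A B : modul Sigma).
Local Notation VA := (mnode A).
Local Notation VB := (mnode B).

Definition harmonic (x : VA) (y : VB) : bool :=
  [&& x \in @mR _ A, y \in @mL _ B, @mrlab _ A x == @mllab _ B y & @mridx _ A x == @mlidx _ B y].

Definition matchedB (y : VB) : bool := [exists x, harmonic x y].
Definition matchedA (x : VA) : bool := [exists y, harmonic x y].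

Definition compV : finType := (VA + {y : VB | ~~ matchedB y})%type.

Definition fA (x : VA) : compV := inl x.

Definition fB (y : VB) : compV :=
  (if matchedB y as b return (matchedB y = b -> compV) then
     fun h => inl (xchoose (existsP h))
   else fun h => inr (exist _ y (negbT h))) (erefl _).

Definition mcount (l : option Sigma) : nat :=
  #|[set xy : VA * VB | harmonic xy.1 xy.2 && (@mrlab _ A xy.1 == l)]|.
Definition pcount (l : option Sigma) : nat := #|[set x in @mL _ A | @mllab _ A x == l]|.
Definition qcount (l : option Sigma) : nat := #|[set y in @mR _ B | @mrlab _ B y == l]|.

Definition comp_edge : rel compV := fun u v =>
  [exists x, exists z, [&& @medge _ A x z, fA x == u & fA z == v]] ||
  [exists y, exists w, [&& @medge _ B y w, fB y == u & fB w == v]].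

Definition comp_L : {set compV} :=
  [set u | [exists x, (x \in @mL _ A) && (fA x == u)] ||
           [exists y, [&& y \in @mL _ B, ~~ matchedB y & fB y == u]]].

Definition comp_R : {set compV} :=
  [set u | [exists y, (y \in @mR _ B) && (fB y == u)] ||
           [exists x, [&& x \in @mR _ A, ~~ matchedA x & fA x == u]]].

Definition comp_llab (u : compV) : option Sigma :=
  match u with inl x => @mllab _ A x | inr y => @mllab _ B (val y) end.

Definition comp_lidx (u : compV) : nat :=
  match u with
  | inl x => @mlidx _ A x
  | inr y => pcount (@mllab _ B (val y)) + @mlidx _ B (val y) - mcount (@mllab _ B (val y))
  end.

Definition comp_rlab (u : compV) : option Sigma :=
  match [pick y in @mR _ B | fB y == u] with
  | Some y => @mrlab _ B y
  | None => match u with inl x => @mrlab _ A x | inr _ => None end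
  end.

Definition comp_ridx (u : compV) : nat :=
  match [pick y in @mR _ B | fB y == u] with
  | Some y => @mridx _ B y
  | None => match u with
            | inl x => qcount (@mrlab _ A x) + @mridx _ A x - mcount (@mrlab _ A x)
            | inr _ => 0 end
  end.

Definition compose : modul Sigma :=
  @Modul Sigma compV comp_edge comp_L comp_R comp_llab comp_lidx comp_rlab comp_ridx.
End Compose.

(* Petri nets N = (P,T;F): arcs p -> t given by [pre p t], arcs t -> p by
   [post t p]. *)
Section Net.
Variables (P T : finType) (pre : P -> T -> bool) (post : T -> P -> bool).

(* Transition atom [t]: nodes = pre(t) u post(t) u {t}; [None] is t. *)
Definition atomV (t : T) : finType := option {p : P | pre p t || post t p}.

Definition atom (t : T) : modul P :=
  @Modul P (atomV t)
    (fun u v => match u, v with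
                | Some p, None => pre (val p) t
                | None, Some p => post t (val p)
                | _, _ => false end)
    [set u | u != None] [set u | u != None]
    (fun u => omap val u) (fun _ => 1)
    (fun u => omap val u) (fun _ => 1).

Definition net_mod : modul P :=
  @Modul P (P + T)%type
    (fun u v => match u, v with
                | inl p, inr t => pre p t
                | inr t, inl p => post t p
                | _, _ => false end)
    [set u | if u is inl _ then true else false] [set u | if u is inl _ then true else false]
    (fun u => if u is inl p then Some p else None) (fun _ => 1)
    (fun u => if u is inl p then Some p else None) (fun _ => 1).
End Net.

From mathcomp Require Import all_boot.
Set Implicit Arguments. Unset Strict Implicit. Unset Printing Implicit Defensive.

(* Call a module a copy of the subnet spanned by a set S of
   transitions if it embeds into [N] with image S together with all places
   adjacent to S, with both interfaces equal to the places, every place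
   labelled by itself and indexed by 1.  The empty module is a copy of the
   subnet spanned by no transition.  If A is a copy of the subnet spanned by S
   and t is not in S, the harmonic pairs of A* and *[t] are exactly the places
   of [t] already present in A, so A . [t] glues [t] onto A along its shared
   places and is a copy of the subnet spanned by t |: S; all indices stay 1
   because a new place has no namesake in A, and a place of A that is not
   adjacent to t has no namesake in [t].  After all transitions, the absence
   of isolated places makes the embedding onto. *)

Section Net.
Variables (P T : finType) (pre : P -> T -> bool) (post : T -> P -> bool).

Definition net_edge (u v : P + T) : bool :=
  match u, v with
  | inl p, inr t => pre p t
  | inr t, inl p => post t p
  | _, _ => false end.

Definition is_place (u : P + T) : bool := if u is inl _ then true else false.

Definition place_label (u : P + T) : option P := if u is inl p then Some p else None.

Definition in_subnet (S : {set T}) (u : P + T) : bool :=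
  match u with
  | inl p => [exists t in S, pre p t || post t p]
  | inr t => t \in S
  end.

Record subnet_embedding (G : modul P) (S : {set T}) (h : mnode G -> P + T) :
    Prop := {
  emb_inj : injective h;
  emb_image : forall a, in_subnet S a <-> exists x, h x = a;
  emb_edge : forall x y, medge x y = net_edge (h x) (h y);
  emb_L : forall x, (x \in mL G) = is_place (h x);
  emb_R : forall x, (x \in mR G) = is_place (h x);
  emb_Llab : forall x, x \in mL G -> mllab x = place_label (h x) /\ mlidx x = 1;
  emb_Rlab : forall x, x \in mR G -> mrlab x = place_label (h x) /\ mridx x = 1 }.
Arguments subnet_embedding : clear implicits.

Definition embeds_subnet (G : modul P) (S : {set T}) : Prop :=
  exists h, subnet_embedding G S h.

Lemma fBP (Sigma : eqType) (A B : modul Sigma) (y : mnode B) :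
  (exists2 x, harmonic x y & fB A y = inl x) \/
  (exists hy, fB A y = inr (exist _ y hy)).
Proof.
pose Q (u : compV A B) := (exists2 x, @harmonic _ A B x y & u = inl x) \/
  (exists hy, u = inr (exist (fun y => ~~ matchedB A y) y hy)).
suff : Q (fB A y) by [].
rewrite /fB; move: (erefl (matchedB A y)).
case: {2 3}(matchedB A y) => e; last by right; exists (negbT e).
by left; exists (xchoose (existsP e)) => //; exact: (xchooseP (existsP e)).
Qed.

Section ComposeAtom.
Variables (A : modul P) (S : {set T}) (t : T) (h : mnode A -> P + T).
Hypothesis hA : subnet_embedding A S h.
Hypothesis tNS : t \notin S.
Local Notation B := (atom pre post t).

Definition atom_embed (y : mnode B) : P + T :=
  if y is Some p then inl (val p) else inr t.

Definition comp_embed (u : compV A B) : P + T :=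
  match u with inl x => h x | inr y => atom_embed (val y) end.

Lemma atom_embed_inj : injective atom_embed.
Proof. by case=> [p|] [p'|] //= [] /val_inj ->. Qed.

Lemma harmonic_atomE x (y : mnode B) :
  harmonic x y = if y is Some p then h x == inl (val p) else false.
Proof.
rewrite /harmonic; case: y => [p|]; rewrite ?inE ?andbF //=.
case hx: (h x) => [q|q]; last by rewrite (emb_R hA) hx.
have Rx : x \in mR A by rewrite (emb_R hA) hx.
have [-> ->] := emb_Rlab hA Rx; rewrite Rx hx /= andbT.
by apply/eqP/eqP => [[->]|[->]].
Qed.

Lemma comp_embed_fB y : comp_embed (fB A y) = atom_embed y.
Proof.
case: (fBP A y) => [[x hxy ->]|[hy ->]] //=.
by rewrite harmonic_atomE in hxy; case: y hxy => [p|] //= /eqP.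
Qed.

Lemma unmatched_new_place (p : {p : P | pre p t || post t p}) :
  ~~ matchedB A (Some p : mnode B) -> forall x, h x != inl (val p).
Proof.
move=> /existsPn nm x; apply/negP => hx.
by move: (nm x); rewrite harmonic_atomE hx.
Qed.

Lemma fB_unmatched (y : mnode B) (nm : ~~ matchedB A y) :
  exists hy, fB A y = inr (exist _ y hy).
Proof.
case: (fBP A y) => [[x hxy _]|//].
by case/negP: nm; apply/existsP; exists x.
Qed.

Lemma t_not_embedded x : h x != inr t.
Proof.
apply/eqP => hx; have : in_subnet S (h x) by apply/(emb_image hA); exists x.
by rewrite hx /= (negbTE tNS).
Qed.

Lemma comp_embed_inj : injective comp_embed.
Proof.
have old_new x (y : mnode B) : ~~ matchedB A y -> h x != atom_embed y.
  case: y => [p|] nm; last exact: t_not_embedded.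
  exact: unmatched_new_place.
case=> [x|[y hy]] [x'|[y' hy']] /=.
- by move/(emb_inj hA) ->.
- by move=> e; move: (old_new x _ hy'); rewrite e eqxx.
- by move=> e; move: (old_new x' _ hy); rewrite e eqxx.
- move/atom_embed_inj => eyy'; subst y'.
  by congr inr; exact: val_inj.
Qed.

Lemma fB_eqE y u : (fB A y == u) = (atom_embed y == comp_embed u).
Proof.
apply/eqP/eqP => [<-|e]; first by rewrite comp_embed_fB.
by apply: comp_embed_inj; rewrite comp_embed_fB.
Qed.

Lemma fA_eqE x u : (fA B x == u) = (h x == comp_embed u).
Proof. by apply/eqP/eqP => [<-|e] //; apply: comp_embed_inj. Qed.

Lemma comp_embed_image a : in_subnet (t |: S) a <-> exists u, comp_embed u = a.
Proof.
split.
- case: a => [p|t'] /=.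
  + case/existsP => t' /andP []; rewrite in_setU1 => /orP [/eqP ->|St'] adj.
      by exists (fB A (Some (exist _ p adj) : mnode B)); rewrite comp_embed_fB.
    have : in_subnet S (inl p) by apply/existsP; exists t'; rewrite St'.
    by case/(emb_image hA) => x hx; exists (inl x).
  + rewrite in_setU1 => /orP [/eqP ->|St'].
      by exists (fB A (None : mnode B)); rewrite comp_embed_fB.
    have : in_subnet S (inr t') by [].
    by case/(emb_image hA) => x hx; exists (inl x).
- case=> [[x|[y _]] <-] /=.
  + have : in_subnet S (h x) by apply/(emb_image hA); exists x.
    case: (h x) => [p|t'] /=; last by rewrite !inE => ->; rewrite orbT.
    case/existsP => t' /andP [St' adj]; apply/existsP; exists t'.
    by rewrite !inE St' orbT.
  + case: y => [p|] /=; last by rewrite !inE eqxx.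
    by apply/existsP; exists t; rewrite !inE eqxx (valP p).
Qed.

Lemma net_edge_split a b : net_edge a b ->
  in_subnet (t |: S) a -> in_subnet (t |: S) b ->
  (in_subnet S a /\ in_subnet S b) \/
  ((exists y, atom_embed y = a) /\ (exists y, atom_embed y = b)).
Proof.
case: a => [p|t1]; case: b => [p'|t2] //= e.
- move=> _; rewrite !inE => /orP [/eqP et2|St2].
    subst t2; have adj : pre p t || post t p by rewrite e.
    by right; split; [exists (Some (exist _ p adj)) | exists None].
  by left; split => //; apply/existsP; exists t2; rewrite St2 e.
- rewrite !inE => /orP [/eqP et1|St1] _.
    subst t1; have adj : pre p' t || post t p' by rewrite e orbT.
    by right; split; [exists None | exists (Some (exist _ p' adj))].
  by left; split => //; apply/existsP; exists t1; rewrite St1 e orbT.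
Qed.

Lemma comp_embed_edge u v :
  comp_edge u v = net_edge (comp_embed u) (comp_embed v).
Proof.
rewrite /comp_edge; apply/idP/idP.
- case/orP => /existsP [x /existsP [z /and3P [exz]]].
    by move=> /eqP <- /eqP <- /=; rewrite -(emb_edge hA).
  by rewrite !fB_eqE => /eqP <- /eqP <-; case: x z exz => [p|] [q|].
- move=> euv.
  have Su : in_subnet (t |: S) (comp_embed u) by apply/comp_embed_image; exists u.
  have Sv : in_subnet (t |: S) (comp_embed v) by apply/comp_embed_image; exists v.
  case: (net_edge_split euv Su Sv) =>
    [[/(emb_image hA) [x hx] /(emb_image hA) [z hz]] | [[y hy] [w hw]]].
    apply/orP; left; apply/existsP; exists x; apply/existsP; exists z.
    by rewrite !fA_eqE hx hz !eqxx (emb_edge hA) hx hz euv.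
  apply/orP; right; apply/existsP; exists y; apply/existsP; exists w.
  rewrite !fB_eqE hy hw !eqxx !andbT; rewrite -hy -hw in euv.
  by case: y w euv {hy hw} => [p|] [q|].
Qed.

Lemma comp_embed_L u : (u \in comp_L A B) = is_place (comp_embed u).
Proof.
rewrite inE; case: u => [x|[y0 hy0]] /=; apply/orP/idP.
- case=> [/existsP [x0 /andP [Lx0]]|/existsP [y /and3P [_ nm]]].
    by rewrite fA_eqE /= => /eqP/(emb_inj hA) <-; rewrite -(emb_L hA).
  by have [hy ->] := fB_unmatched nm.
- by move=> pl; left; apply/existsP; exists x; rewrite (emb_L hA) pl /fA eqxx.
- case=> [/existsP [x0 /andP [_]] //|/existsP [y /and3P [Ly _]]].
  rewrite fB_eqE /= => /eqP/atom_embed_inj eyy0; subst y0.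
  by move: Ly; rewrite inE; case: y {hy0}.
- move=> pl; right; apply/existsP; exists y0.
  rewrite hy0 inE fB_eqE /= eqxx !andbT.
  by case: y0 pl {hy0}.
Qed.

Lemma comp_embed_R u : (u \in comp_R A B) = is_place (comp_embed u).
Proof.
rewrite inE; apply/orP/idP.
- case=> [/existsP [y /andP [Ry]]|/existsP [x /and3P [Rx _]]].
    by rewrite fB_eqE => /eqP <-; move: Ry; rewrite inE; case: y.
  by rewrite fA_eqE => /eqP <-; rewrite -(emb_R hA).
- case hu: (comp_embed u) => [q|//] _.
  case adj: (pre q t || post t q).
    left; apply/existsP; exists (Some (exist _ q adj) : mnode B).
    by rewrite inE fB_eqE hu /= eqxx.
  right; case: u hu => [x|[[p|] hy]] //= hx; last first.
    by case: hx => eq; move: adj; rewrite -eq (valP p).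
  apply/existsP; exists x; rewrite (emb_R hA) hx fA_eqE /= hx eqxx andbT /=.
  apply/existsPn => -[p|]; rewrite harmonic_atomE // hx.
  by apply/negP => /eqP [eq]; move: adj; rewrite eq (valP p).
Qed.

Lemma mcount_gt0 q : 0 < mcount A B (Some q) ->
  (pre q t || post t q) /\ exists x, h x = inl q.
Proof.
rewrite /mcount card_gt0 => /set0Pn [[x [p|]]]; rewrite inE /= harmonic_atomE //.
case/andP => /eqP hx; have Rx : x \in mR A by rewrite (emb_R hA) hx.
have [-> _] := emb_Rlab hA Rx.
rewrite hx /= => /eqP [eq].
by split; [rewrite -eq (valP p) | exists x; rewrite hx -eq].
Qed.

Lemma comp_embed_Llab u : u \in comp_L A B ->
  comp_llab u = place_label (comp_embed u) /\ comp_lidx u = 1.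
Proof.
rewrite comp_embed_L; case: u => [x|[[p|] hy0]] //= pl.
  by apply: (emb_Llab hA); rewrite (emb_L hA).
split=> //; have nm := unmatched_new_place hy0.
have -> : pcount A (Some (val p)) = 0.
  apply/eqP; rewrite cards_eq0; apply/eqP/setP => x; rewrite !inE.
  apply/negbTE/negP => /andP [Lx' /eqP].
  have [-> _] := emb_Llab hA Lx'.
  case hx: (h x) => [q|] //= [eq].
  by move: (nm x); rewrite hx eq eqxx.
have -> : mcount A B (Some (val p)) = 0.
  apply/eqP; rewrite -leqn0 leqNgt; apply/negP => /mcount_gt0 [_ [x hx]].
  by move: (nm x); rewrite hx eqxx.
by [].
Qed.

Lemma comp_embed_Rlab u : u \in comp_R A B ->
  comp_rlab u = place_label (comp_embed u) /\ comp_ridx u = 1.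
Proof.
move=> Ru; have pl : is_place (comp_embed u) by rewrite -comp_embed_R.
rewrite /comp_rlab /comp_ridx; case: pickP => [y /andP [Ry]|noB].
  by rewrite fB_eqE => /eqP <-; case: y Ry; rewrite ?inE.
case hu: (comp_embed u) pl => [q|//] _.
have nadj : ~~ (pre q t || post t q).
  apply/negP => adj; move: (noB (Some (exist _ q adj) : mnode B)).
  by rewrite inE fB_eqE hu /= eqxx.
case: u Ru hu {noB} => [x|[[p|] hy]] //= _ hx; last first.
  by case: hx => eq; move: nadj; rewrite -eq (valP p).
have Rx : x \in mR A by rewrite (emb_R hA) hx.
have [-> ->] := emb_Rlab hA Rx; rewrite hx /=; split=> //.
have -> : qcount B (Some q) = 0.
  apply/eqP; rewrite cards_eq0; apply/eqP/setP => -[p|]; rewrite !inE //=.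
  by apply/negbTE/eqP => -[eq]; move: nadj; rewrite -eq (valP p).
have -> : mcount A B (Some q) = 0.
  apply/eqP; rewrite -leqn0 leqNgt; apply/negP => /mcount_gt0 [adj _].
  by rewrite adj in nadj.
by [].
Qed.

Lemma compose_atom_embedding : subnet_embedding (compose A B) (t |: S) comp_embed.
Proof.
split.
- exact: comp_embed_inj.
- exact: comp_embed_image.
- exact: comp_embed_edge.
- exact: comp_embed_L.
- exact: comp_embed_R.
- exact: comp_embed_Llab.
- exact: comp_embed_Rlab.
Qed.

End ComposeAtom.

Lemma embeds_subnet_compose_atom (A : modul P) S t :
  embeds_subnet A S -> t \notin S ->
  embeds_subnet (compose A (atom pre post t)) (t |: S).
Proof. by case=> h hA tNS; exists (comp_embed h); exact: compose_atom_embedding. Qed.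

Lemma embeds_subnet_empty : embeds_subnet (empty_mod P) set0.
Proof.
exists (fun x : void => match x with end); split; [by case| |by case..].
case=> [p|t] /=; split; [|by case| |by case].
- by case/existsP => t'; rewrite inE.
- by rewrite inE.
Qed.

Lemma embeds_subnet_foldl (A : modul P) S ts :
  embeds_subnet A S -> uniq ts -> (forall t, t \in ts -> t \notin S) ->
  embeds_subnet (foldl (fun A t => compose A (atom pre post t)) A ts)
                (S :|: [set t in ts]).
Proof.
elim: ts A S => [|t ts IH] A S hA /=.
  by move=> _ _; rewrite (_ : S :|: _ = S) //; apply/setP => x; rewrite !inE orbF.
case/andP => tNts uts tsNS.
have -> : S :|: [set x in t :: ts] = (t |: S) :|: [set x in ts].
  by apply/setP => x; rewrite !inE orbA [(x == t) || _]orbC.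
apply: IH uts _ => [|x xts].
  by apply: embeds_subnet_compose_atom => //; exact: tsNS (mem_head _ _).
rewrite !inE negb_or tsNS ?inE ?xts ?orbT // andbT.
by apply: contraNneq tNts => <-.
Qed.

Lemma mod_iso_net_of_embedding (G : modul P) (h : mnode G -> P + T) :
  (forall p : P, exists t : T, pre p t || post t p) ->
  subnet_embedding G [set: T] h -> mod_iso G (net_mod pre post).
Proof.
move=> adjP hG.
have h_onto a : exists x, h x = a.
  apply/(emb_image hG); case: a => [p|t] /=; last by rewrite inE.
  by have [t adj] := adjP p; apply/existsP; exists t; rewrite inE.
have bij : bijective h.
  apply: inj_card_bij; first exact: (emb_inj hG).
  rewrite -(card_codom (emb_inj hG)); apply: subset_leq_card; apply/subsetP => a _.
  by have [x <-] := h_onto a; exact: codom_f.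
exists h; split=> //; split; first by move=> x y; rewrite (emb_edge hG).
split; first by move=> x; rewrite inE (emb_L hG).
split; first by move=> x; rewrite inE (emb_R hG).
split.
  move=> x Lx; have [-> ->] := emb_Llab hG Lx.
  by move: Lx; rewrite (emb_L hG); case: (h x).
move=> x Rx; have [-> ->] := emb_Rlab hG Rx.
by move: Rx; rewrite (emb_R hG); case: (h x).
Qed.

End Net.

Theorem mainTheorem2 (P T : finType) (pre : P -> T -> bool)
    (post : T -> P -> bool) (ts : seq T) :
  (forall p : P, exists t : T, pre p t || post t p) ->
  (forall t : T, exists p : P, pre p t || post t p) ->
  uniq ts -> (forall t : T, t \in ts) ->
  mod_iso (foldl (fun A t => compose A (atom pre post t)) (empty_mod P) ts)
          (net_mod pre post).
Proof.
move=> adjP _ uts all_ts.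
have [h hA] := embeds_subnet_foldl (embeds_subnet_empty pre post) uts
  (fun t _ => negbT (in_set0 t)).
apply: (mod_iso_net_of_embedding adjP (h := h)).
suff -> : [set: T] = set0 :|: [set t in ts] by [].
by apply/setP => t; rewrite !inE all_ts.
Qed.
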